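(* Let $\mathbf P=(P,\leq,{}',0,1)$ be an orthogonal lub-complete poset. Then the following conditions are equivalent: (i) $\mathbf P$ is a Boolean poset. (ii) For all $x,y\in P$, $x\leq y$ if and only if $x\rightarrow_C y=1$. (iii) $\mathbf P$ is a Boolean algebra.
   Context: $(P,\leq,{}',0,1)$ is a bounded poset with an antitone involution ${}'$ ($x\leq y\Rightarrow y'\leq x'$, $x''=x$); orthogonal means $x\leq y'$ implies $x\vee y$ exists; lub-complete means for every lower bound $x$ of a finite subset $M$ there is a maximal lower bound of $M$ above $x$. For $A\subseteq P$, $U(A)$ is the upper cone, $U(x,y)=U(\{x,y\})$, and $\mathrm{Min}\,A$ is the set of minimal elements of $A$. The classical implication is $x\rightarrow_C y:=\mathrm{Min}\,U(x',y)$; $x\rightarrow_C y=1$ means it equals $\{1\}$. $\mathbf P$ is a Boolean poset if it is distributive ($L(U(x,y),z)=LU(L(x,z),L(y,z))$, with $L$ the lower cone) and complemented (each $x$ has $y$ with $L(x,y)=L(P)$, $U(x,y)=U(P)$). *)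

From Stdlib Require Import List.
Set Implicit Arguments.

Section PosetDefs.
Variables (P : Type) (le : P -> P -> Prop) (c : P -> P) (z o : P).

Definition Upper (A : P -> Prop) : P -> Prop := fun u => forall a, A a -> le a u.
Definition Lower (A : P -> Prop) : P -> Prop := fun l => forall a, A a -> le l a.
Definition pair (x y : P) : P -> Prop := fun w => w = x \/ w = y.
Definition Min (A : P -> Prop) : P -> Prop :=
  fun m => A m /\ forall a, A a -> le a m -> a = m.
Definition set_eq (A B : P -> Prop) : Prop := forall w, A w <-> B w.
Definition whole : P -> Prop := fun _ => True.
Definition single (x : P) : P -> Prop := fun w => w = x.
Definition union (A B : P -> Prop) : P -> Prop := fun w => A w \/ B w.

(* bounded poset with antitone involution ' = c, bottom z, top o *)
Definition bounded_poset_inv : Prop :=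
  (forall x, le x x) /\
  (forall x y, le x y -> le y x -> x = y) /\
  (forall x y w, le x y -> le y w -> le x w) /\
  (forall x, le z x) /\ (forall x, le x o) /\
  (forall x y, le x y -> le (c y) (c x)) /\
  (forall x, c (c x) = x).

Definition is_sup (x y s : P) : Prop := Upper (pair x y) s /\ forall u, Upper (pair x y) u -> le s u.
Definition is_inf (x y m : P) : Prop := Lower (pair x y) m /\ forall l, Lower (pair x y) l -> le l m.

Definition orthogonal : Prop := forall x y, le x (c y) -> exists s, is_sup x y s.

Definition lub_complete : Prop :=
  forall (M : list P) x, Lower (fun w => In w M) x ->
    exists w, Lower (fun v => In v M) w /\ le x w /\
      forall v, Lower (fun u => In u M) v -> le w v -> v = w.

Definition distributive_poset : Prop :=
  forall x y w,
    set_eq (Lower (union (Upper (pair x y)) (single w)))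
           (Lower (Upper (union (Lower (pair x w)) (Lower (pair y w))))).

Definition complemented_by_c : Prop :=
  forall x, set_eq (Lower (pair x (c x))) (Lower whole) /\
            set_eq (Upper (pair x (c x))) (Upper whole).

Definition boolean_poset : Prop := distributive_poset /\ complemented_by_c.

Definition impl_C (x y : P) : P -> Prop := Min (Upper (pair (c x) y)).

Definition boolean_algebra : Prop :=
  exists (j m : P -> P -> P),
    (forall x y, is_sup x y (j x y)) /\ (forall x y, is_inf x y (m x y)) /\
    (forall x y w, m x (j y w) = j (m x y) (m x w)) /\
    (forall x, m x (c x) = z /\ j x (c x) = o).
End PosetDefs.

(** Dualising lub-completeness through the involution gives, below any upper
    bound of [x] and [y], a minimal one; hence [x ->_C y = 1] just says that
    [1] is the only upper bound of [x'] and [y].  In a Boolean poset this holds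
    iff [x <= y].  Conversely, if it characterises [<=], then [x] and [x'] have
    no common lower bound but [0], and [L(t, y) = {0}] forces [t <= y'].  With
    orthogonality this makes every minimal upper bound of [x, y] a least one,
    so [P] is a lattice (meets by De Morgan), and the same disjointness
    criterion yields distributivity. *)

From Stdlib Require Import List Setoid IndefiniteDescription.
Set Implicit Arguments.

Section InvolutionPoset.
Variables (P : Type) (le : P -> P -> Prop) (c : P -> P) (z o : P).
Hypothesis HP : bounded_poset_inv le c z o.

Lemma le_refl x : le x x.
Proof. destruct HP as (H & _). apply H. Qed.

Lemma le_antisym x y : le x y -> le y x -> x = y.
Proof. destruct HP as (_ & H & _). apply H. Qed.

Lemma le_trans x y w : le x y -> le y w -> le x w.
Proof. destruct HP as (_ & _ & H & _). apply H. Qed.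

Lemma le_bot x : le z x.
Proof. destruct HP as (_ & _ & _ & H & _). apply H. Qed.

Lemma le_top x : le x o.
Proof. destruct HP as (_ & _ & _ & _ & H & _). apply H. Qed.

Lemma compl_antitone x y : le x y -> le (c y) (c x).
Proof. destruct HP as (_ & _ & _ & _ & _ & H & _). apply H. Qed.

Lemma compl_involutive x : c (c x) = x.
Proof. destruct HP as (_ & _ & _ & _ & _ & _ & H). apply H. Qed.

Lemma compl_le_swap x y : le x (c y) -> le y (c x).
Proof. intro H. apply compl_antitone in H. now rewrite compl_involutive in H. Qed.

Lemma compl_swap_le x y : le (c x) y -> le (c y) x.
Proof. intro H. apply compl_antitone in H. now rewrite compl_involutive in H. Qed.

Lemma compl_bot : c z = o.
Proof. apply le_antisym; [apply le_top | apply compl_le_swap, le_bot]. Qed.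

Lemma compl_top : c o = z.
Proof. now rewrite <- compl_bot, compl_involutive. Qed.

Lemma Upper_pair a b u : Upper le (pair a b) u <-> le a u /\ le b u.
Proof.
  split.
  - intro H. split; apply H; [left | right]; reflexivity.
  - intros [Ha Hb] w [-> | ->]; assumption.
Qed.

Lemma Lower_pair a b l : Lower le (pair a b) l <-> le l a /\ le l b.
Proof.
  split.
  - intro H. split; apply H; [left | right]; reflexivity.
  - intros [Ha Hb] w [-> | ->]; assumption.
Qed.

Lemma sup_le_iff x y s u : is_sup le x y s -> (le s u <-> le x u /\ le y u).
Proof.
  intros [Hs Hleast]. apply Upper_pair in Hs as [Hx Hy]. split.
  - intro Hsu. split; eapply le_trans; eassumption.
  - intro Hu. apply Hleast, Upper_pair, Hu.
Qed.

Lemma le_inf_iff x y i l : is_inf le x y i -> (le l i <-> le l x /\ le l y).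
Proof.
  intros [Hi Hgreatest]. apply Lower_pair in Hi as [Hx Hy]. split.
  - intro Hli. split; eapply le_trans; eassumption.
  - intro Hl. apply Hgreatest, Lower_pair, Hl.
Qed.

Lemma sup_ub x y s : is_sup le x y s -> le x s /\ le y s.
Proof. intro Hs. apply Upper_pair, Hs. Qed.

Lemma inf_lb x y i : is_inf le x y i -> le i x /\ le i y.
Proof. intro Hi. apply Lower_pair, Hi. Qed.

Lemma Lower_Upper_pair x y s v :
  is_sup le x y s -> (Lower le (Upper le (pair x y)) v <-> le v s).
Proof.
  intro Hs. split.
  - intro Hv. apply Hv, Hs.
  - intros Hvs u Hu. eapply le_trans; [eassumption | now apply Hs].
Qed.

Lemma Upper_Lower_pair x y i u :
  is_inf le x y i -> (Upper le (Lower le (pair x y)) u <-> le i u).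
Proof.
  intro Hi. split.
  - intro Hu. apply Hu, Hi.
  - intros Hiu l Hl. eapply le_trans; [now apply Hi | eassumption].
Qed.

Lemma is_sup_compl x y s : is_sup le x y s -> is_inf le (c x) (c y) (c s).
Proof.
  intro Hs. split.
  - apply Lower_pair. split; apply compl_antitone, Hs; [left | right]; reflexivity.
  - intros l Hl. apply Lower_pair in Hl as [Hx Hy]. apply compl_le_swap, Hs, Upper_pair.
    split; apply compl_le_swap; assumption.
Qed.

Definition disjoint (a b : P) : Prop := forall r, le r a -> le r b -> r = z.
Definition codisjoint (a b : P) : Prop := forall s, le a s -> le b s -> s = o.

Section Lattice.
Variables (j m : P -> P -> P).
Hypothesis sup_j : forall x y, is_sup le x y (j x y).
Hypothesis inf_m : forall x y, is_inf le x y (m x y).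

Lemma inf_comm x y : m x y = m y x.
Proof.
  apply le_antisym; apply (le_inf_iff _ (inf_m _ _)); apply and_comm, inf_lb, inf_m.
Qed.

Lemma sup_inf_le_inf_sup x y w : le (j (m x y) (m x w)) (m x (j y w)).
Proof.
  destruct (inf_lb (inf_m x y)) as [Hxy_x Hxy_y].
  destruct (inf_lb (inf_m x w)) as [Hxw_x Hxw_w].
  destruct (sup_ub (sup_j y w)) as [Hy Hw].
  apply (sup_le_iff _ (sup_j _ _)).
  split; apply (le_inf_iff _ (inf_m _ _)); split; try assumption;
    eapply le_trans; eassumption.
Qed.

Hypothesis distr_m_j : forall x y w, m x (j y w) = j (m x y) (m x w).

Lemma lattice_distributive_poset : distributive_poset le.
Proof.
  intros x y w v.
  assert (Hlhs : Lower le (union (Upper le (pair x y)) (single w)) v <-> le v (m w (j x y))).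
  { rewrite (le_inf_iff _ (inf_m _ _)), <- (Lower_Upper_pair _ (sup_j x y)). split.
    - intro H. split; [apply H; now right | intros u Hu; apply H; now left].
    - intros [Hw Hxy] u [Hu | ->]; [now apply Hxy | assumption]. }
  assert (Hrhs : forall u, Upper le (union (Lower le (pair x w)) (Lower le (pair y w))) u <->
                           le (j (m w x) (m w y)) u).
  { intro u. rewrite (sup_le_iff _ (sup_j _ _)), (inf_comm w x), (inf_comm w y),
      <- (Upper_Lower_pair _ (inf_m x w)), <- (Upper_Lower_pair _ (inf_m y w)).
    split.
    - intro H. split; intros l Hl; apply H; [now left | now right].
    - intros [Hx Hy] l [Hl | Hl]; [now apply Hx | now apply Hy]. }
  rewrite Hlhs, distr_m_j. split.
  - intros Hv u Hu. eapply le_trans; [eassumption | apply (proj1 (Hrhs u) Hu)].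
  - intro Hv. apply Hv, Hrhs, le_refl.
Qed.

Hypothesis compl_laws : forall x, m x (c x) = z /\ j x (c x) = o.

Lemma lattice_complemented : complemented_by_c le c.
Proof.
  intro x. destruct (compl_laws x) as [Hinf Hsup]. split; intro w; split.
  - intros Hw a _. eapply le_trans; [| apply le_bot].
    rewrite <- Hinf. apply (le_inf_iff _ (inf_m _ _)), Lower_pair, Hw.
  - intros Hw a _. now apply Hw.
  - intros Hw a _. eapply le_trans; [apply le_top |].
    rewrite <- Hsup. apply (sup_le_iff _ (sup_j _ _)), Upper_pair, Hw.
  - intros Hw a _. now apply Hw.
Qed.

End Lattice.

Lemma boolean_algebra_boolean_poset : boolean_algebra le c z o -> boolean_poset le c.
Proof.
  intros (j & m & Hj & Hm & Hdistr & Hcompl). split.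
  - eapply lattice_distributive_poset; eassumption.
  - eapply lattice_complemented; eassumption.
Qed.

Lemma complemented_disjoint x : complemented_by_c le c -> disjoint x (c x).
Proof.
  intros Hcompl r Hx Hcx. destruct (Hcompl x) as [HL _].
  apply le_antisym; [| apply le_bot].
  apply (proj1 (HL r)); [apply Lower_pair; now split | exact I].
Qed.

Lemma complemented_codisjoint x : complemented_by_c le c -> codisjoint x (c x).
Proof.
  intros Hcompl s Hx Hcx. destruct (Hcompl x) as [_ HU].
  apply le_antisym; [apply le_top |].
  apply (proj1 (HU s)); [apply Upper_pair; now split | exact I].
Qed.

Lemma boolean_poset_le_iff_codisjoint :
  boolean_poset le c -> forall x y, le x y <-> codisjoint (c x) y.
Proof.
  intros [Hdistr Hcompl] x y. split.
  - intros Hxy s Hcx Hy. apply (complemented_codisjoint (x := x) Hcompl); [| assumption].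
    eapply le_trans; eassumption.
  - (* Distributivity at [(x', y, x)]: [x] is in [L(U(x', y), x)], so it lies below
       every upper bound of [L(x', x) = {0}] and [L(y, x)], such as [y]. *)
    intro Hcodis.
    assert (Hx : Lower le (union (Upper le (pair (c x) y)) (single x)) x).
    { intros a [Ha | ->]; [| apply le_refl].
      apply Upper_pair in Ha as [Hcx Hy]. rewrite (Hcodis a Hcx Hy). apply le_top. }
    apply (Hdistr (c x) y x) in Hx. apply Hx.
    intros b [Hb | Hb]; apply Lower_pair in Hb as [Hb1 Hb2].
    + rewrite (complemented_disjoint (x := x) Hcompl Hb2 Hb1). apply le_bot.
    + assumption.
Qed.

Hypothesis Hlub : lub_complete le.

(** The maximal lower bound of [{a', b'}] above [t'], complemented. *)
Lemma exists_min_upper_below a b t :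
  le a t -> le b t -> exists u, Min le (Upper le (pair a b)) u /\ le u t.
Proof.
  intros Ha Hb.
  assert (Hlow : forall l, Upper le (pair a b) (c l) <->
                           Lower le (fun v => In v (c a :: c b :: nil)) l).
  { intro l. rewrite Upper_pair. split.
    - intros [Hal Hbl] v [<- | [<- | []]]; apply compl_le_swap; assumption.
    - intro Hl. split; apply compl_le_swap, Hl; simpl; auto. }
  assert (Hct : Lower le (fun v => In v (c a :: c b :: nil)) (c t)).
  { apply Hlow. rewrite compl_involutive. now apply Upper_pair. }
  destruct (Hlub _ Hct) as (w & Hw & Htw & Hmax).
  exists (c w). repeat split.
  - now apply Hlow.
  - intros v Hv Hvw. rewrite <- (compl_involutive v). f_equal.
    apply Hmax; [apply Hlow; now rewrite compl_involutive |].
    now apply compl_le_swap.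
  - now apply compl_swap_le.
Qed.

Lemma impl_C_eq_top_iff x y :
  set_eq (impl_C le c x y) (single o) <-> codisjoint (c x) y.
Proof.
  split.
  - intros Himpl s Hcx Hy.
    destruct (exists_min_upper_below Hcx Hy) as (u & Hu & Hus).
    apply Himpl in Hu. unfold single in Hu. subst u.
    apply le_antisym; [apply le_top | assumption].
  - intros Hcodis w. split.
    + intros [Hw _]. apply Upper_pair in Hw as [Hcx Hy]. now apply Hcodis.
    + intros ->. split; [now apply Upper_pair; split; apply le_top |].
      intros a Ha _. apply Upper_pair in Ha as [Hcx Hy]. now apply Hcodis.
Qed.

Section CodisjointnessOrder.
Hypothesis le_iff_codisjoint : forall x y, le x y <-> codisjoint (c x) y.

Lemma disjoint_compl x : disjoint x (c x).
Proof.
  intros r Hx Hcx. rewrite <- (compl_involutive r), <- compl_top. f_equal.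
  apply (proj1 (le_iff_codisjoint x x) (le_refl x)).
  - now apply compl_antitone.
  - now apply compl_le_swap.
Qed.

Lemma disjoint_le_compl t y : disjoint t y -> le t (c y).
Proof.
  intro Hdis. apply le_iff_codisjoint. intros s Ht Hy.
  rewrite <- (compl_involutive s), <- compl_bot. f_equal.
  apply Hdis; apply compl_swap_le; assumption.
Qed.

Hypothesis Hort : orthogonal le c.

(** [u <= v] follows from [L(u, v') = {0}].  A common lower bound [r] lies below [x']
    and [y'], so the join [s] of [r] and [u'] makes [s' <= u] an upper bound of [x, y];
    minimality forces [s' = u], whence [r <= u /\ u'].  *)
Lemma min_upper_is_sup x y u : Min le (Upper le (pair x y)) u -> is_sup le x y u.
Proof.
  intros [Hu Hmin]. split; [assumption |]. intros v Hv.
  apply Upper_pair in Hu as [Hxu Hyu]. apply Upper_pair in Hv as [Hxv Hyv].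
  rewrite <- (compl_involutive v). apply disjoint_le_compl. intros r Hru Hrcv.
  assert (Hcv : le (c v) (c x) /\ le (c v) (c y)) by (split; apply compl_antitone; assumption).
  assert (Hrx : le r (c x)) by (apply le_trans with (c v); [| apply Hcv]; assumption).
  assert (Hry : le r (c y)) by (apply le_trans with (c v); [| apply Hcv]; assumption).
  destruct (@Hort r (c u)) as (s & Hs); [now rewrite compl_involutive |].
  destruct (sup_ub Hs) as [Hrs Hcus].
  assert (Hsx : le s (c x))
    by (apply (sup_le_iff _ Hs); split; [| apply compl_antitone]; assumption).
  assert (Hsy : le s (c y))
    by (apply (sup_le_iff _ Hs); split; [| apply compl_antitone]; assumption).
  assert (Hcs : c s = u).
  { apply Hmin; [apply Upper_pair; split; apply compl_le_swap; assumption |].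
    now apply compl_swap_le. }
  apply (disjoint_compl Hru). now rewrite <- Hcs, compl_involutive.
Qed.

Lemma sup_exists x y : exists s, is_sup le x y s.
Proof.
  destruct (exists_min_upper_below (le_top x) (le_top y)) as (u & Hu & _).
  exists u. now apply min_upper_is_sup.
Qed.

Definition sup x y : P := proj1_sig (constructive_indefinite_description _ (sup_exists x y)).
Definition inf x y : P := c (sup (c x) (c y)).

Lemma sup_spec x y : is_sup le x y (sup x y).
Proof. exact (proj2_sig (constructive_indefinite_description _ (sup_exists x y))). Qed.

Lemma inf_spec x y : is_inf le x y (inf x y).
Proof.
  pose proof (is_sup_compl (sup_spec (c x) (c y))) as H.
  now rewrite !compl_involutive in H.
Qed.

Lemma inf_compl x : inf x (c x) = z.
Proof.
  destruct (inf_lb (inf_spec x (c x))) as [Hx Hcx].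
  exact (disjoint_compl Hx Hcx).
Qed.

Lemma sup_compl x : sup x (c x) = o.
Proof.
  rewrite <- (compl_involutive (sup _ _)), <- compl_bot. f_equal.
  pose proof (is_sup_compl (sup_spec x (c x))) as H. rewrite compl_involutive in H.
  destruct (inf_lb H) as [Hcx Hx].
  exact (disjoint_compl Hx Hcx).
Qed.

(** If [q <= x /\ (y \/ w)] is below the complement of the right-hand side, every
    common lower bound of [q] and [y] lies below [x /\ y], hence is [0]; so
    [q <= y'], likewise [q <= w'], and [q <= (y \/ w)'] forces [q = 0]. *)
Lemma inf_sup_distr x y w : inf x (sup y w) = sup (inf x y) (inf x w).
Proof.
  set (d := sup (inf x y) (inf x w)).
  apply le_antisym; [| apply sup_inf_le_inf_sup; [apply sup_spec | apply inf_spec]].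
  rewrite <- (compl_involutive d). apply disjoint_le_compl. intros q Hq Hqd.
  apply (le_inf_iff _ (inf_spec _ _)) in Hq as [Hqx Hqyw].
  assert (Hcompl_part : forall a, le (inf x a) d -> le q (c a)).
  { intros a Had. apply disjoint_le_compl. intros p Hpq Hpa.
    apply (disjoint_compl (x := d)); [| apply le_trans with q; assumption].
    apply le_trans with (inf x a); [| exact Had].
    apply (le_inf_iff _ (inf_spec _ _)). split; [apply le_trans with q |]; assumption. }
  destruct (sup_ub (sup_spec (inf x y) (inf x w))) as [Hyd Hwd].
  apply (disjoint_compl Hqyw). apply (le_inf_iff _ (is_sup_compl (sup_spec y w))).
  split; apply Hcompl_part; assumption.
Qed.

Lemma le_iff_codisjoint_boolean_algebra : boolean_algebra le c z o.
Proof.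
  exists sup, inf.
  split; [exact sup_spec |].
  split; [exact inf_spec |].
  split; [exact inf_sup_distr |].
  intro x. split; [apply inf_compl | apply sup_compl].
Qed.

End CodisjointnessOrder.

Lemma le_iff_impl_C_top_iff :
  (forall x y, le x y <-> set_eq (impl_C le c x y) (single o)) <->
  (forall x y, le x y <-> codisjoint (c x) y).
Proof.
  split; intros H x y; rewrite H; [| symmetry]; apply impl_C_eq_top_iff.
Qed.

End InvolutionPoset.

Theorem theorem2 (P : Type) (le : P -> P -> Prop) (c : P -> P) (z o : P)
  (HP : bounded_poset_inv le c z o)
  (Hort : orthogonal le c)
  (Hlub : lub_complete le) :
  (boolean_poset le c <->
     (forall x y, le x y <-> set_eq (impl_C le c x y) (single o))) /\
  ((forall x y, le x y <-> set_eq (impl_C le c x y) (single o)) <->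
     boolean_algebra le c z o).
Proof.
  rewrite (le_iff_impl_C_top_iff HP Hlub).
  pose proof (boolean_poset_le_iff_codisjoint HP) as Hi_ii.
  pose proof (fun Hii => le_iff_codisjoint_boolean_algebra HP Hlub Hii Hort) as Hii_iii.
  pose proof (boolean_algebra_boolean_poset HP) as Hiii_i.
  split; split; auto.
Qed.
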